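(* Let $\mathbf{y}\in\mathbb{R}_\infty$. Then: (i) the Moore–Penrose pseudoinverse $\mathbf{y}^+$ of $\mathbf{y}$ (as a bounded operator on $\ell_{2+}$) belongs to $\mathbb{R}_\infty$; (ii) $\mathbf{y}$ has a unique positive semi-definite square root $\sqrt{\mathbf{y}}$ if and only if $\mathbf{y}\succeq\mathbf{0}$, and furthermore $\sqrt{\mathbf{y}}\in\mathbb{R}_\infty$.
   Context: $\ell_{2+}$ is the Hilbert space of square-summable real sequences $(y[0],y[1],\ldots)$ with inner product $\langle x,y\rangle=\sum_k x[k]y[k]$. The forward shift is $\mathfrak{q}:(y[0],y[1],\ldots)\mapsto(y[1],y[2],\ldots)$, with adjoint $\mathfrak{q}^*:(y[0],y[1],\ldots)\mapsto(0,y[0],y[1],\ldots)$. $\mathbb{R}_\infty=\{\sum_{k=0}^N\alpha_k(\mathfrak{q}^* )^k\mathfrak{q}^k : N\in\mathbb{N},\ \alpha_k\in\mathbb{R}\}$. An operator $\mathbf{M}$ is positive semi-definite, $\mathbf{M}\succeq\mathbf{0}$, if $\mathbf{M}=\mathbf{M}^*$ and $\langle x,\mathbf{M}x\rangle\ge0$ for all $x\in\ell_{2+}$. *)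

From Stdlib Require Import Reals.
From Coquelicot Require Import Coquelicot.
Open Scope R_scope.

Definition rseq := nat -> R.
Definition l2 (x : rseq) : Prop := ex_series (fun k => (x k) ^ 2).
Definition inner (x y : rseq) : R := Series (fun k => x k * y k).

(* Operators act on sequences; only their action on l2 matters. *)
Definition op := rseq -> rseq.
Definition op_eq (A B : op) : Prop := forall x, l2 x -> forall n, A x n = B x n.
Definition op_comp (A B : op) : op := fun x => A (B x).

Definition bounded_op (M : op) : Prop :=
  (forall x, l2 x -> l2 (M x)) /\
  (forall (a : R) x y, l2 x -> l2 y -> forall n,
      M (fun k => a * x k + y k) n = a * M x n + M y n) /\
  (exists C : R, forall x, l2 x -> inner (M x) (M x) <= C * inner x x).

Definition self_adjoint (M : op) : Prop :=
  forall x y, l2 x -> l2 y -> inner x (M y) = inner (M x) y.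

Definition psd (M : op) : Prop :=
  self_adjoint M /\ forall x, l2 x -> 0 <= inner x (M x).

Definition qsh (x : rseq) : rseq := fun n => x (S n).
Definition qsh_star (x : rseq) : rseq :=
  fun n => match n with O => 0 | S m => x m end.

Definition in_Rinf (M : op) : Prop :=
  exists (N : nat) (alpha : nat -> R), forall x, l2 x -> forall n,
    M x n = sum_f_R0 (fun k => alpha k * Nat.iter k qsh_star (Nat.iter k qsh x) n) N.

Definition is_MP_pinv (Y Z : op) : Prop :=
  bounded_op Z /\
  op_eq (op_comp Y (op_comp Z Y)) Y /\
  op_eq (op_comp Z (op_comp Y Z)) Z /\
  self_adjoint (op_comp Y Z) /\
  self_adjoint (op_comp Z Y).

Definition is_psd_sqrt (Y S : op) : Prop :=
  bounded_op S /\ psd S /\ op_eq (op_comp S S) Y.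

From Stdlib Require Import Reals.
From Coquelicot Require Import Coquelicot.
From Stdlib Require Import FunctionalExtensionality Lia Lra Psatz.
Open Scope R_scope.

(* Since (q^* )^k q^k multiplies a sequence by the indicator of {n >= k}, the
   elements of R_infty are exactly the multiplication operators by eventually
   constant sequences d.  Multiplication by the pointwise pseudoinverse of d
   and by sqrt d are then the candidates.  Uniqueness is read off coordinate
   by coordinate: for self-adjoint A, (A x)_i = <A e_i, x>.  A positive square
   root S of y commutes with y = S^2, hence preserves the eigenspaces of y, and
   on the eigenspace for c it must act as sqrt c. *)

Definition basis (i : nat) : rseq := fun k => if Nat.eqb k i then 1 else 0.

Definition diag (g : nat -> R) : op := fun x n => g n * x n.

Definition bounded_seq (g : nat -> R) : Prop := exists B, forall n, Rabs (g n) <= B.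

Definition eventually_constant (g : nat -> R) (N : nat) : Prop :=
  forall n, g n = g (Nat.min n N).

Lemma is_series_zero : is_series (fun _ : nat => 0) 0.
Proof.
  assert (H : is_series (fun n => 0 * (/ 2) ^ n) (0 * / (1 - / 2))).
  { apply (is_series_scal_l (V := R_NormedModule)), is_series_geom.
    rewrite Rabs_pos_eq; lra. }
  rewrite Rmult_0_l in H. revert H. apply is_series_ext. intros; apply Rmult_0_l.
Qed.

Lemma Series_zero : Series (fun _ => 0) = 0.
Proof. apply is_series_unique, is_series_zero. Qed.

Lemma is_series_basis i : is_series (basis i) 1.
Proof.
  induction i as [|i IH]; apply is_series_decr_1.
  - change (is_series (fun _ : nat => 0) (1 - 1)). rewrite Rminus_diag. exact is_series_zero.
  - change (is_series (basis i) (1 - 0)). rewrite Rminus_0_r. exact IH.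
Qed.

Lemma Series_basis_l i v : Series (fun k => basis i k * v k) = v i.
Proof.
  rewrite (Series_ext _ (fun k => v i * basis i k)).
  - rewrite Series_scal_l, (is_series_unique _ _ (is_series_basis i)). ring.
  - intros k; unfold basis. destruct (Nat.eqb_spec k i); subst; ring.
Qed.

Lemma inner_basis_l i v : inner (basis i) v = v i.
Proof. apply Series_basis_l. Qed.

Lemma l2_basis i : l2 (basis i).
Proof.
  exists 1. apply (is_series_ext (basis i)); [|apply is_series_basis].
  intros k; unfold basis. destruct (Nat.eqb k i); simpl; ring.
Qed.

Lemma ex_series_dominated (a b : nat -> R) :
  (forall n, Rabs (a n) <= b n) -> ex_series b -> ex_series a.
Proof. exact (ex_series_le (V := R_CompleteNormedModule) a b). Qed.

Lemma l2_dominated c x y : (forall k, x k ^ 2 <= c * y k ^ 2) -> l2 y -> l2 x.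
Proof.
  intros Hxy Hy. apply (ex_series_dominated _ (fun k => c * y k ^ 2)).
  - intros k. change (Rabs (x k ^ 2) <= c * y k ^ 2).
    rewrite Rabs_pos_eq by apply pow2_ge_0. apply Hxy.
  - exact (ex_series_scal_l c _ Hy).
Qed.

Lemma l2_lin a x y : l2 x -> l2 y -> l2 (fun k => a * x k + y k).
Proof.
  intros Hx Hy. apply (ex_series_dominated _ (fun k => 2 * a ^ 2 * x k ^ 2 + 2 * y k ^ 2)).
  - intros k. change (Rabs ((a * x k + y k) ^ 2) <= 2 * a ^ 2 * x k ^ 2 + 2 * y k ^ 2).
    rewrite Rabs_pos_eq by apply pow2_ge_0.
    pose proof (pow2_ge_0 (a * x k - y k)). nra.
  - exact (ex_series_plus _ _ (ex_series_scal_l _ _ Hx) (ex_series_scal_l _ _ Hy)).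
Qed.

Lemma ex_series_inner x y : l2 x -> l2 y -> ex_series (fun k => x k * y k).
Proof.
  intros Hx Hy. apply (ex_series_dominated _ (fun k => x k ^ 2 + y k ^ 2)).
  - intros k. change (Rabs (x k * y k) <= x k ^ 2 + y k ^ 2).
    apply Rabs_le; split; nra.
  - exact (ex_series_plus _ _ Hx Hy).
Qed.

Lemma inner_self_ge0 x : l2 x -> 0 <= inner x x.
Proof.
  intros Hx. rewrite <- Series_zero. apply Series_le; [|apply ex_series_inner; assumption].
  intros k; split; [lra|apply Rle_0_sqr].
Qed.

Lemma inner_self_eq0 x : l2 x -> inner x x = 0 -> forall i, x i = 0.
Proof.
  intros Hx Hxx i.
  assert (x i * x i <= 0).
  { rewrite <- Hxx, <- (Series_basis_l i (fun k => x k * x k)).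
    apply Series_le; [|apply ex_series_inner; assumption].
    intros k; unfold basis. pose proof (Rle_0_sqr (x k)); unfold Rsqr in *.
    destruct (Nat.eqb k i); lra. }
  nra.
Qed.

Lemma bounded_op_scal (M : op) : bounded_op M ->
  forall a x, l2 x -> forall n, M (fun k => a * x k) n = a * M x n.
Proof.
  intros [_ [M_lin _]] a x Hx n.
  pose proof (M_lin (a - 1) x x Hx Hx n) as H.
  rewrite (functional_extensionality (fun k => (a - 1) * x k + x k) (fun k => a * x k))
    in H by (intros; ring).
  rewrite H. ring.
Qed.

Lemma self_adjoint_coord (A : op) x i : self_adjoint A -> l2 x ->
  A x i = inner (A (basis i)) x.
Proof. intros HA Hx. rewrite <- inner_basis_l. apply HA; [apply l2_basis | exact Hx]. Qed.

Lemma diag_bounded g : bounded_seq g -> bounded_op (diag g).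
Proof.
  intros [B HB].
  assert (sq_le : forall n, g n ^ 2 <= B ^ 2).
  { intros n. rewrite <- (pow2_abs (g n)). pose proof (Rabs_pos (g n)).
    pose proof (HB n). nra. }
  split; [|split].
  - intros x Hx. apply (l2_dominated (B ^ 2) _ x); [|exact Hx].
    intros k. unfold diag. rewrite Rpow_mult_distr.
    pose proof (pow2_ge_0 (x k)). pose proof (sq_le k). nra.
  - intros; unfold diag; ring.
  - exists (B ^ 2). intros x Hx. unfold inner, diag.
    rewrite <- Series_scal_l. apply Series_le.
    + intros n. pose proof (sq_le n). pose proof (Rle_0_sqr (x n)).
      unfold Rsqr in *. split; nra.
    + exact (ex_series_scal_l _ _ (ex_series_inner x x Hx Hx)).
Qed.

Lemma diag_self_adjoint g : self_adjoint (diag g).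
Proof. intros x y _ _. unfold inner, diag. apply Series_ext; intros; ring. Qed.

Lemma diag_psd g : bounded_seq g -> (forall n, 0 <= g n) -> psd (diag g).
Proof.
  intros Hg g_ge0. split; [apply diag_self_adjoint|].
  intros x Hx. rewrite <- Series_zero. apply Series_le.
  - intros n. unfold diag. pose proof (g_ge0 n). pose proof (Rle_0_sqr (x n)).
    unfold Rsqr in *. split; nra.
  - apply ex_series_inner; [exact Hx | apply (diag_bounded g Hg); exact Hx].
Qed.

Lemma inner_comm x y : inner x y = inner y x.
Proof. unfold inner. apply Series_ext; intros; ring. Qed.

Lemma square_psd (s y : op) : bounded_op s -> self_adjoint s ->
  op_eq (op_comp s s) y -> psd y.
Proof.
  intros [s_l2 _] s_sa s_sq.
  assert (inner_y : forall x w, l2 x -> l2 w -> inner x (y w) = inner (s x) (s w)).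
  { intros x w Hx Hw. rewrite <- (s_sa x (s w)) by auto.
    unfold inner. apply Series_ext; intros k. rewrite <- (s_sq w Hw). reflexivity. }
  split.
  - intros x w Hx Hw. rewrite (inner_comm (y x)), !inner_y by assumption. apply inner_comm.
  - intros x Hx. rewrite inner_y by exact Hx. apply inner_self_ge0, s_l2, Hx.
Qed.

Lemma psd_sqrt_eigen (s : op) u c : bounded_op s -> psd s -> l2 u -> 0 <= c ->
  (forall k, s (s u) k = c * u k) -> forall k, s u k = sqrt c * u k.
Proof.
  intros [s_l2 [s_lin _]] [s_sa s_pos] Hu c_ge0 s_sq.
  set (r := sqrt c).
  (* [s w = - r w], which the positivity of [s] allows only for [w = 0]. *)
  set (w := fun k => - r * u k + s u k).
  assert (Hw : l2 w) by (apply l2_lin; [exact Hu | apply s_l2, Hu]).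
  assert (s_w : forall k, s w k = - r * w k).
  { intros k. unfold w. rewrite s_lin, s_sq by auto.
    rewrite <- (sqrt_sqrt c c_ge0). fold r. ring. }
  assert (w_null : inner w w = 0).
  { destruct (Rle_lt_or_eq_dec 0 r (sqrt_pos c)) as [r_pos | r_0].
    - pose proof (s_pos w Hw) as H. unfold inner in H.
      rewrite (Series_ext _ (fun k => - r * (w k * w k))), Series_scal_l in H
        by (intros; rewrite s_w; ring).
      pose proof (inner_self_ge0 w Hw). unfold inner in *. nra.
    - assert (c_0 : c = 0) by (rewrite <- (sqrt_sqrt c c_ge0); fold r; rewrite <- r_0; ring).
      transitivity (inner (s u) (s u)).
      { unfold inner. apply Series_ext; intros k. unfold w. rewrite <- r_0. ring. }
      rewrite <- s_sa by auto. unfold inner.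
      rewrite <- Series_zero. apply Series_ext; intros k. rewrite s_sq, c_0. ring. }
  intros k. pose proof (inner_self_eq0 w Hw w_null k) as H. unfold w in H. fold r. lra.
Qed.

Lemma bounded_upto (g : nat -> R) N : exists B, forall m, (m <= N)%nat -> Rabs (g m) <= B.
Proof.
  induction N as [|N [B HB]].
  - exists (Rabs (g 0%nat)). intros m Hm. replace m with 0%nat by lia. lra.
  - exists (Rmax B (Rabs (g (S N)))). intros m Hm.
    destruct (Nat.eq_dec m (S N)) as [-> | Hne]; [apply Rmax_r|].
    eapply Rle_trans; [apply HB; lia | apply Rmax_l].
Qed.

Lemma eventually_constant_bounded g N : eventually_constant g N -> bounded_seq g.
Proof.
  intros Hg. destruct (bounded_upto g N) as [B HB]. exists B.
  intros n. rewrite Hg. apply HB, Nat.le_min_r.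
Qed.

Lemma eventually_constant_comp (f : R -> R) g N :
  eventually_constant g N -> eventually_constant (fun n => f (g n)) N.
Proof. intros Hg n. rewrite (Hg n). reflexivity. Qed.

Lemma iter_qsh k x n : Nat.iter k qsh x n = x (k + n)%nat.
Proof.
  revert n; induction k as [|k IH]; intros n; [reflexivity|].
  simpl. unfold qsh at 1. rewrite IH. f_equal; lia.
Qed.

Lemma iter_qsh_star k x n :
  Nat.iter k qsh_star x n = if (k <=? n)%nat then x (n - k)%nat else 0.
Proof.
  revert n; induction k as [|k IH]; intros n.
  - simpl. rewrite Nat.sub_0_r. reflexivity.
  - simpl. unfold qsh_star at 1. destruct n as [|n]; [reflexivity|]. apply IH.
Qed.

Lemma iter_shift_back k x n :
  Nat.iter k qsh_star (Nat.iter k qsh x) n = if (k <=? n)%nat then x n else 0.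
Proof.
  rewrite iter_qsh_star. destruct (Nat.leb_spec k n); [|reflexivity].
  rewrite iter_qsh. f_equal. lia.
Qed.

Definition diff_seq (g : nat -> R) (k : nat) : R :=
  match k with O => g O | S j => g (S j) - g j end.

Lemma sum_diff_seq g n M :
  sum_f_R0 (fun k => if (k <=? n)%nat then diff_seq g k else 0) M = g (Nat.min n M).
Proof.
  induction M as [|M IH]; cbn [sum_f_R0].
  - rewrite Nat.min_0_r. destruct n; reflexivity.
  - rewrite IH. destruct (Nat.leb_spec (S M) n).
    + rewrite !Nat.min_r by lia. simpl. ring.
    + rewrite !Nat.min_l by lia. ring.
Qed.

Lemma in_Rinf_diag (M : op) :
  in_Rinf M <-> exists g N, eventually_constant g N /\ op_eq M (diag g).
Proof.
  assert (sum_shift : forall alpha N x n,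
    sum_f_R0 (fun k => alpha k * Nat.iter k qsh_star (Nat.iter k qsh x) n) N =
    sum_f_R0 (fun k => if (k <=? n)%nat then alpha k else 0) N * x n).
  { intros alpha N x n. rewrite Rmult_comm, scal_sum. apply sum_eq; intros k _.
    rewrite iter_shift_back. destruct (k <=? n)%nat; ring. }
  split.
  - intros [N [alpha HM]].
    exists (fun n => sum_f_R0 (fun k => if (k <=? n)%nat then alpha k else 0) N), N. split.
    + intros n. apply sum_eq; intros k Hk.
      destruct (Nat.leb_spec k n), (Nat.leb_spec k (Nat.min n N)); lia || reflexivity.
    + intros x Hx n. rewrite HM by exact Hx. apply sum_shift.
  - intros [g [N [Hg HM]]]. exists N, (diff_seq g). intros x Hx n.
    rewrite HM, sum_shift, sum_diff_seq, <- Hg by exact Hx. reflexivity.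
Qed.

Definition pinvR (a : R) : R := if Req_EM_T a 0 then 0 else / a.

Lemma pinvR_mul_cancel a : a * pinvR a * a = a.
Proof. unfold pinvR. destruct (Req_EM_T a 0) as [->|]; [ring | field; assumption]. Qed.

Lemma pinvR_pinvR_mul_cancel a : pinvR a * a * pinvR a = pinvR a.
Proof. unfold pinvR. destruct (Req_EM_T a 0); [ring | field; assumption]. Qed.

Lemma is_psd_sqrt_psd (y s : op) : is_psd_sqrt y s -> psd y.
Proof. intros [s_bd [[s_sa _] s_sq]]. exact (square_psd s y s_bd s_sa s_sq). Qed.

Section Multiplier.

Variables (y : op) (d : nat -> R).
Hypothesis y_diag : op_eq y (diag d).

Lemma y_basis i : y (basis i) = fun k => d i * basis i k.
Proof.
  apply functional_extensionality; intros k. rewrite y_diag by apply l2_basis.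
  unfold diag, basis. destruct (Nat.eqb_spec k i) as [->|]; ring.
Qed.

Lemma diag_MP_pinv : bounded_seq d -> bounded_seq (fun n => pinvR (d n)) ->
  is_MP_pinv y (diag (fun n => pinvR (d n))).
Proof.
  intros d_bd z_bd. apply diag_bounded in d_bd, z_bd.
  pose proof d_bd as [d_l2 _]. pose proof z_bd as [z_l2 _].
  assert (y_l2 : forall x, l2 x -> l2 (y x)).
  { intros x Hx. apply (l2_dominated 1 _ (diag d x)); [|apply d_l2, Hx].
    intros k. rewrite y_diag by exact Hx. lra. }
  split; [exact z_bd | split; [|split; [|split]]].
  - intros x Hx n. unfold op_comp. rewrite y_diag by auto. unfold diag.
    rewrite y_diag by exact Hx. unfold diag.
    transitivity (d n * pinvR (d n) * d n * x n); [ring|].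
    rewrite pinvR_mul_cancel. reflexivity.
  - intros x Hx n. unfold op_comp, diag at 1. rewrite y_diag by auto. unfold diag.
    transitivity (pinvR (d n) * d n * pinvR (d n) * x n); [ring|].
    rewrite pinvR_pinvR_mul_cancel. reflexivity.
  - intros x w Hx Hw. unfold op_comp, inner. apply Series_ext; intros k.
    rewrite !y_diag by auto. unfold diag. ring.
  - intros x w Hx Hw. unfold op_comp, inner. apply Series_ext; intros k.
    unfold diag. rewrite !y_diag by auto. unfold diag. ring.
Qed.

Lemma MP_pinv_coord_nonzero z : is_MP_pinv y z ->
  forall i, d i <> 0 -> forall x, l2 x -> d i * z x i = x i.
Proof.
  intros [[z_l2 _] [yzy [_ [yz_sa _]]]] i di x Hx.
  set (v := fun k => / d i * basis i k).
  assert (Hv : l2 v).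
  { apply (l2_dominated ((/ d i) ^ 2) _ (basis i)); [|apply l2_basis].
    intros k. unfold v. rewrite Rpow_mult_distr. lra. }
  assert (yv : y v = basis i).
  { apply functional_extensionality; intros k. rewrite y_diag by exact Hv.
    unfold diag, v, basis. destruct (Nat.eqb_spec k i) as [->|]; [field; exact di | ring]. }
  assert (yz_basis : y (z (basis i)) = basis i).
  { rewrite <- yv. apply functional_extensionality; intros k. exact (yzy v Hv k). }
  change (d i * z x i) with (diag d (z x) i). rewrite <- y_diag by (apply z_l2, Hx).
  change (op_comp y z x i = x i). rewrite (self_adjoint_coord _ x i yz_sa Hx).
  unfold op_comp. rewrite yz_basis. apply inner_basis_l.
Qed.

Lemma MP_pinv_coord_zero z : is_MP_pinv y z ->
  forall i, d i = 0 -> forall x, l2 x -> z x i = 0.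
Proof.
  intros [z_bd [_ [zyz [_ zy_sa]]]] i di x Hx. pose proof z_bd as [z_l2 _].
  rewrite <- (zyz x Hx i). change (op_comp z y (z x) i = 0).
  rewrite (self_adjoint_coord _ _ i zy_sa (z_l2 x Hx)).
  unfold op_comp, inner. rewrite y_basis, di.
  rewrite (Series_ext _ (fun _ => 0)); [apply Series_zero|].
  intros k. rewrite (bounded_op_scal z z_bd 0 _ (l2_basis i)). ring.
Qed.

Lemma MP_pinv_unique z : is_MP_pinv y z -> op_eq z (diag (fun n => pinvR (d n))).
Proof.
  intros Hz x Hx n. unfold diag, pinvR. destruct (Req_EM_T (d n) 0) as [dn | dn].
  - rewrite (MP_pinv_coord_zero z Hz n dn x Hx). ring.
  - apply (Rmult_eq_reg_l (d n)); [|exact dn].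
    rewrite (MP_pinv_coord_nonzero z Hz n dn x Hx). field. exact dn.
Qed.

Lemma psd_diag_nonneg : psd y -> forall i, 0 <= d i.
Proof.
  intros [_ y_pos] i. pose proof (y_pos (basis i) (l2_basis i)) as H.
  rewrite inner_basis_l, y_basis in H. unfold basis in H. rewrite Nat.eqb_refl in H. lra.
Qed.

Lemma diag_psd_sqrt : bounded_seq (fun n => sqrt (d n)) -> (forall n, 0 <= d n) ->
  is_psd_sqrt y (diag (fun n => sqrt (d n))).
Proof.
  intros Hb d_ge0. split; [apply diag_bounded, Hb | split].
  - apply diag_psd; [exact Hb | intros; apply sqrt_pos].
  - intros x Hx n. unfold op_comp, diag. rewrite y_diag by exact Hx. unfold diag.
    rewrite <- Rmult_assoc, sqrt_sqrt by apply d_ge0. reflexivity.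
Qed.

(* [s] commutes with [y = s^2]. *)
Lemma psd_sqrt_basis_support s i k : is_psd_sqrt y s -> d i <> d k -> s (basis i) k = 0.
Proof.
  intros [s_bd [_ s_sq]] dik. pose proof s_bd as [s_l2 _].
  assert (E1 : s (s (s (basis i))) k = d k * s (basis i) k).
  { transitivity (y (s (basis i)) k); [apply s_sq, s_l2, l2_basis|].
    rewrite y_diag by (apply s_l2, l2_basis). reflexivity. }
  assert (E2 : s (s (s (basis i))) k = d i * s (basis i) k).
  { assert (sse : s (s (basis i)) = y (basis i))
      by (apply functional_extensionality, s_sq, l2_basis).
    rewrite sse, y_basis. apply (bounded_op_scal s s_bd), l2_basis. }
  assert (E : (d i - d k) * s (basis i) k = 0) by lra.
  apply Rmult_integral in E as [E|E]; [lra | exact E].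
Qed.

Lemma psd_sqrt_unique s : (forall n, 0 <= d n) -> is_psd_sqrt y s ->
  op_eq s (diag (fun n => sqrt (d n))).
Proof.
  intros d_ge0 Hs x Hx i. pose proof Hs as [s_bd [s_psd s_sq]]. pose proof s_psd as [s_sa _].
  set (u := fun k => if Req_EM_T (d k) (d i) then x k else 0).
  assert (Hu : l2 u).
  { apply (l2_dominated 1 _ x); [|exact Hx].
    intros k. unfold u. pose proof (pow2_ge_0 (x k)). destruct Req_EM_T; simpl; lra. }
  assert (sx_su : s x i = s u i).
  { rewrite !(self_adjoint_coord s _ i s_sa) by assumption.
    unfold inner. apply Series_ext; intros k. unfold u.
    destruct (Req_EM_T (d k) (d i)) as [|dk]; [reflexivity|].
    rewrite psd_sqrt_basis_support by auto. ring. }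
  assert (ssu : forall k, s (s u) k = d i * u k).
  { intros k. transitivity (y u k); [apply s_sq, Hu|].
    rewrite y_diag by exact Hu. unfold diag, u.
    destruct (Req_EM_T (d k) (d i)) as [->|]; ring. }
  unfold diag. rewrite sx_su, (psd_sqrt_eigen s u (d i) s_bd s_psd Hu (d_ge0 i) ssu i).
  unfold u. destruct (Req_EM_T (d i) (d i)); [reflexivity | contradiction].
Qed.

End Multiplier.

Theorem lemma2 (y : op) (hy : in_Rinf y) :
  ((exists z, is_MP_pinv y z) /\ (forall z, is_MP_pinv y z -> in_Rinf z)) /\
  (((exists s, is_psd_sqrt y s) /\
    (forall s1 s2, is_psd_sqrt y s1 -> is_psd_sqrt y s2 -> op_eq s1 s2))
   <-> psd y) /\
  (forall s, is_psd_sqrt y s -> in_Rinf s).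
Proof.
  destruct (proj1 (in_Rinf_diag y) hy) as [d [N [d_const y_diag]]].
  assert (const_comp : forall f : R -> R, eventually_constant (fun n => f (d n)) N)
    by (intros f; apply eventually_constant_comp, d_const).
  assert (bounded_comp : forall f : R -> R, bounded_seq (fun n => f (d n)))
    by (intros f; apply (eventually_constant_bounded _ N), const_comp).
  assert (s_diag : forall s, is_psd_sqrt y s -> op_eq s (diag (fun n => sqrt (d n)))).
  { intros s Hs. apply (psd_sqrt_unique y d y_diag); [|exact Hs].
    exact (psd_diag_nonneg y d y_diag (is_psd_sqrt_psd y s Hs)). }
  split; [split | split; [split |]].
  - exists (diag (fun n => pinvR (d n))).
    apply diag_MP_pinv; [exact y_diag | exact (bounded_comp id) | apply bounded_comp].
  - intros z Hz. apply in_Rinf_diag. exists (fun n => pinvR (d n)), N.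
    split; [apply const_comp | exact (MP_pinv_unique y d y_diag z Hz)].
  - intros [[s Hs] _]. exact (is_psd_sqrt_psd y s Hs).
  - intros y_psd. split.
    + exists (diag (fun n => sqrt (d n))).
      apply diag_psd_sqrt; [exact y_diag | apply bounded_comp | exact (psd_diag_nonneg y d y_diag y_psd)].
    + intros s1 s2 H1 H2 x Hx n.
      rewrite (s_diag s1 H1 x Hx n), (s_diag s2 H2 x Hx n). reflexivity.
  - intros s Hs. apply in_Rinf_diag. exists (fun n => sqrt (d n)), N.
    split; [apply const_comp | exact (s_diag s Hs)].
Qed.
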